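(* Let $\theta(q,x):=\sum_{j=0}^{\infty}q^{j(j+1)/2}x^j$, $\Theta^*(q,x):=\sum_{j=-\infty}^{\infty}q^{j(j+1)/2}x^j$ and $G(q,x):=\sum_{j=-\infty}^{-1}q^{j(j+1)/2}x^j$, so that $\theta=\Theta^*-G$. For $q\in[0.5,1)$ and $x$ on the arc $C_2:=\{x\in\mathbb{C}:\ |x|=3,\ \arg x\in[3\pi/4,\pi]\}$, one has $|G(q,x)|>|\Theta^*(q,x)|$, hence $|\theta(q,x)|>0$. *)

From Stdlib Require Import Reals.
From Coquelicot Require Import Coquelicot.
Open Scope R_scope.

Definition CSeries (a : nat -> C) : C :=
  (Series (fun n => Re (a n)), Series (fun n => Im (a n))).

Definition Cpown (x : C) (n : nat) : C := @pow_n C_Ring x n.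

Definition qtri (q : R) (j : nat) : R := q ^ (Nat.div (j * (j + 1)) 2).

Definition theta (q : R) (x : C) : C :=
  CSeries (fun j => Cmult (RtoC (qtri q j)) (Cpown x j)).

(* G(q,x) = sum_{j=-oo}^{-1} q^{j(j+1)/2} x^j ; with j = -(k+1), k >= 0,
   j(j+1)/2 = (k+1)k/2 = qtri exponent at k. *)
Definition Gfun (q : R) (x : C) : C :=
  CSeries (fun k => Cmult (RtoC (qtri q k)) (Cpown (Cinv x) (S k))).

Definition ThetaStar (q : R) (x : C) : C := Cplus (theta q x) (Gfun q x).

Definition arc_pt (phi : R) : C := (3 * cos phi, 3 * sin phi).

(* On the arc, |x| = 3 and Re x <= 3 cos (3 pi / 4) < -2.1.

   |G| >= 1/6: the leading term 1/x of G has modulus 1/3, and the other terms are dominated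
   by sum_(l >= 1) 3^(-l-1) = 1/6.

   |Theta*| < 1/6: by the q-binomial theorem, the truncated Jacobi triple product
     (q;q)_n prod_(m < n) (1 + x q^(m+1)) (1 + q^m / x)
   equals sum_(-n <= j <= n) w_(n,j) q^(j(j+1)/2) x^j with w_(n,j) = (q;q)_n [2n, n+j]_q and
   0 <= 1 - w_(n,j) <= q^(n-|j|+1) / (1 - q).  Hence the truncated products tend to
   Theta*(q, x), and |Theta*| is at most any partial product of the moduli of the factors.
   On the arc each factor has modulus at most 1, and the one with t = q^(m+1) has squared
   modulus at most (1 - t)^2 (1 - 4.2 t + 9 t^2); finitely many factors with t in explicit
   intervals already give a product below 1/6. *)
From Stdlib Require Import Reals Lra Lia List.
From Coquelicot Require Import Coquelicot.
Import ListNotations.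
Open Scope R_scope.

Section Iterated.
Variables (A : Type) (op : A -> A -> A) (idx : A).

Fixpoint big (f : nat -> A) (n : nat) : A :=
  match n with O => idx | S k => op (big f k) (f k) end.

Lemma big_ext f g n : (forall i, (i < n)%nat -> f i = g i) -> big f n = big g n.
Proof.
  induction n as [|n IH]; intros Hfg; simpl; auto.
  rewrite IH, Hfg; auto; intros; apply Hfg; lia.
Qed.

Hypothesis opA : forall a b c, op a (op b c) = op (op a b) c.
Hypothesis op1l : forall a, op idx a = a.
Hypothesis op1r : forall a, op a idx = a.

Lemma big_split f a b :
  big f (a + b) = op (big f a) (big (fun i => f (a + i)%nat) b).
Proof.
  induction b as [|b IH]; simpl.
  - now rewrite Nat.add_0_r, op1r.
  - now rewrite Nat.add_succ_r; simpl; rewrite IH, opA.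
Qed.

Lemma big_recl f n : big f (S n) = op (f O) (big (fun i => f (S i)) n).
Proof. change (S n) with (1 + n)%nat; rewrite big_split; simpl; now rewrite op1l. Qed.

Hypothesis opC : forall a b, op a b = op b a.

Lemma big_rev f n : big f n = big (fun i => f (n - 1 - i)%nat) n.
Proof.
  induction n as [|n IH]; auto.
  transitivity (op (big f n) (f n)); [reflexivity|].
  rewrite big_recl, IH, opC; replace (S n - 1 - 0)%nat with n by lia.
  f_equal; apply big_ext; intros i Hi; f_equal; lia.
Qed.

Lemma big_op f g n : big (fun i => op (f i) (g i)) n = op (big f n) (big g n).
Proof.
  induction n as [|n IH]; simpl; auto.
  rewrite IH, <- !opA; f_equal; rewrite !opA; f_equal; apply opC.
Qed.

End Iterated.

Arguments big {A} op idx f n.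

Notation csum := (big Cplus (RtoC 0)).
Notation cprod := (big Cmult (RtoC 1)).
Notation rsum := (big Rplus 0).
Notation rprod := (big Rmult 1).

Lemma rsum_le f g n : (forall i, (i < n)%nat -> f i <= g i) -> rsum f n <= rsum g n.
Proof.
  induction n as [|n IH]; intros Hfg; simpl; [lra|].
  assert (f n <= g n) by (apply Hfg; lia).
  enough (rsum f n <= rsum g n) by lra.
  apply IH; intros; apply Hfg; lia.
Qed.

Lemma rsum_mult_l c f n : rsum (fun i => c * f i) n = c * rsum f n.
Proof. induction n as [|n IH]; simpl; [ring | rewrite IH; ring]. Qed.

Lemma rsum_sum_n a N : rsum a (S N) = sum_n a N.
Proof.
  induction N as [|N IH]; [simpl; rewrite sum_O; ring|].
  rewrite sum_Sn, <- IH; reflexivity.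
Qed.

Lemma rsum_le_Series a N : (forall i, 0 <= a i) -> ex_series a -> rsum a N <= Series a.
Proof.
  intros Ha Hex; apply Rle_trans with (rsum a (S N)); [simpl; specialize (Ha N); lra|].
  rewrite rsum_sum_n; apply is_lim_seq_incr_compare; [exact (Series_correct _ Hex)|].
  intros n; rewrite sum_Sn; specialize (Ha (S n)); unfold plus; simpl; lra.
Qed.

Lemma Series_partial_cv a : ex_series a -> forall eps, 0 < eps ->
  exists N0, forall N, (N0 <= N)%nat -> Rabs (Series a - rsum a N) < eps.
Proof.
  intros Ha eps Heps.
  assert (Hcv : Un_cv (sum_n a) (Series a)).
  { apply is_lim_seq_Reals; exact (Series_correct _ Ha). }
  destruct (Hcv eps Heps) as [N0 HN0]; exists (S N0); intros [|N] HN; [lia|].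
  rewrite rsum_sum_n, Rabs_minus_sym; apply HN0; lia.
Qed.

Lemma rprod_nonneg_le_1 f n : (forall m, 0 <= f m <= 1) -> 0 <= rprod f n <= 1.
Proof. intros Hf; induction n as [|n IH]; simpl; [lra | specialize (Hf n); nra]. Qed.

Lemma rprod_antitone f n d : (forall m, 0 <= f m <= 1) -> rprod f (n + d) <= rprod f n.
Proof.
  intros Hf; induction d as [|d IH]; [rewrite Nat.add_0_r; lra|].
  rewrite Nat.add_succ_r; simpl; pose proof (rprod_nonneg_le_1 f (n + d) Hf).
  specialize (Hf (n + d)%nat); nra.
Qed.

Lemma rprod_le f g n : (forall m, 0 <= f m <= g m) -> rprod f n <= rprod g n.
Proof.
  intros Hfg; induction n as [|n IH]; simpl; [lra|].
  assert (0 <= rprod f n) by (clear IH; induction n; simpl; [lra | specialize (Hfg n); nra]).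
  specialize (Hfg n); apply Rmult_le_compat; lra.
Qed.

Lemma rprod_pow2 f n : rprod (fun m => f m ^ 2) n = rprod f n ^ 2.
Proof. induction n as [|n IH]; cbn [big]; [ring | rewrite IH; ring]. Qed.

Lemma pow_S_lt_1 q m : 0 <= q < 1 -> q ^ S m < 1.
Proof. intros Hq; apply pow_lt_1_compat; [lra | lia]. Qed.

Lemma pow_add_le q m d : 0 <= q <= 1 -> q ^ (m + d) <= q ^ m.
Proof.
  intros Hq; rewrite pow_add.
  assert (0 <= q ^ d <= 1)
    by (split; [apply pow_le; lra | rewrite <- (pow1 d); apply pow_incr; lra]).
  assert (0 <= q ^ m) by (apply pow_le; lra); nra.
Qed.

Lemma pow_mul_inv_pow q m : q <> 0 -> q ^ m * (/ q) ^ m = 1.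
Proof. intros Hq; rewrite <- Rpow_mult_distr, Rinv_r by auto; apply pow1. Qed.

Lemma pow_cancel_inv q k b c : q <> 0 -> q ^ (k * b + c) * ((/ q) ^ k) ^ b = q ^ c.
Proof.
  intros Hq; rewrite pow_add, <- pow_mult.
  transitivity ((q ^ (k * b) * (/ q) ^ (k * b)) * q ^ c); [ring|].
  rewrite pow_mul_inv_pow by auto; ring.
Qed.

(** * q-Pochhammer symbols and Gaussian binomial coefficients *)

Definition qpoch (q : R) (n : nat) : R := rprod (fun m => 1 - q ^ S m) n.

Definition qbinom (q : R) (N i : nat) : R :=
  if (i <=? N)%nat then qpoch q N / (qpoch q i * qpoch q (N - i)) else 0.

Fixpoint tri (i : nat) : nat := match i with O => O | S k => (tri k + k)%nat end.

Lemma tri_double a : (2 * tri a + a = a * a)%nat.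
Proof. induction a; simpl tri; lia. Qed.

Lemma qtri_tri q j : qtri q j = q ^ (tri j + j).
Proof.
  unfold qtri; f_equal; pose proof (tri_double j).
  replace (j * (j + 1))%nat with ((tri j + j) * 2)%nat by nia.
  apply Nat.div_mul; lia.
Qed.

Lemma qpoch_S q n : qpoch q (S n) = qpoch q n * (1 - q ^ S n).
Proof. reflexivity. Qed.

Lemma qpoch_pos q n : 0 <= q < 1 -> 0 < qpoch q n.
Proof.
  intros Hq; induction n as [|n IH]; [unfold qpoch; simpl; lra|].
  rewrite qpoch_S; pose proof (pow_S_lt_1 q n Hq); apply Rmult_lt_0_compat; lra.
Qed.

Lemma qbinom_0 q N : 0 <= q < 1 -> qbinom q N 0 = 1.
Proof.
  intros Hq; unfold qbinom; simpl; rewrite Nat.sub_0_r.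
  pose proof (qpoch_pos q N Hq); change (qpoch q 0) with 1; field; lra.
Qed.

Lemma qbinom_diag q N : 0 <= q < 1 -> qbinom q N N = 1.
Proof.
  intros Hq; unfold qbinom; rewrite Nat.leb_refl, Nat.sub_diag.
  pose proof (qpoch_pos q N Hq); change (qpoch q 0) with 1; field; lra.
Qed.

Lemma qbinom_gt q N i : (N < i)%nat -> qbinom q N i = 0.
Proof. intros H; unfold qbinom; destruct (Nat.leb_spec i N); [lia | auto]. Qed.

Lemma qbinom_sym q N i : (i <= N)%nat -> qbinom q N (N - i) = qbinom q N i.
Proof.
  intros Hi; unfold qbinom.
  destruct (Nat.leb_spec i N), (Nat.leb_spec (N - i) N); try lia.
  now replace (N - (N - i))%nat with i by lia; rewrite Rmult_comm.
Qed.

Lemma qbinom_pascal q N i : 0 <= q < 1 ->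
  qbinom q (S N) (S i) = qbinom q N (S i) + q ^ (N - i) * qbinom q N i.
Proof.
  intros Hq; destruct (Compare_dec.lt_eq_lt_dec i N) as [[Hlt| ->]|Hgt].
  - destruct (Nat.le_exists_sub (S i) N) as [r [-> _]]; [lia|].
    unfold qbinom.
    replace (S (r + S i) - S i)%nat with (S r) by lia.
    replace (r + S i - S i)%nat with r by lia.
    replace (r + S i - i)%nat with (S r) by lia.
    replace (r + S i)%nat with (S (i + r)) by lia.
    destruct (Nat.leb_spec (S i) (S (S (i + r)))), (Nat.leb_spec (S i) (S (i + r))),
      (Nat.leb_spec i (S (i + r))); try lia.
    pose proof (qpoch_pos q (i + r) Hq); pose proof (qpoch_pos q i Hq);
      pose proof (qpoch_pos q r Hq).
    pose proof (pow_S_lt_1 q i Hq); pose proof (pow_S_lt_1 q r Hq);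
      pose proof (pow_S_lt_1 q (i + r) Hq).
    assert (Hsplit : q ^ S (S (i + r)) = q ^ S i * q ^ S r)
      by (rewrite <- pow_add; f_equal; lia).
    rewrite !qpoch_S, Hsplit; field; repeat split; try lra;
      apply Rgt_not_eq, Rmult_lt_0_compat; lra.
  - rewrite qbinom_diag, qbinom_gt, qbinom_diag, Nat.sub_diag by (auto || lia); simpl; ring.
  - rewrite !qbinom_gt by lia; ring.
Qed.

Lemma qbinom_tri_rec q N i : 0 <= q < 1 ->
  qbinom q (S N) (S i) * q ^ tri (S i)
  = qbinom q N (S i) * q ^ tri (S i) + q ^ N * (qbinom q N i * q ^ tri i).
Proof.
  intros Hq; rewrite qbinom_pascal by auto.
  destruct (Nat.le_gt_cases i N) as [Hi|Hi].
  - assert (Hexp : q ^ (N - i) * q ^ tri (S i) = q ^ N * q ^ tri i)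
      by (simpl tri; rewrite <- !pow_add; f_equal; lia).
    rewrite Rmult_plus_distr_r, Rmult_assoc, (Rmult_comm (qbinom q N i)), <- Rmult_assoc,
      Hexp; ring.
  - rewrite (qbinom_gt q N i) by lia; ring.
Qed.

Lemma qpoch_ratio q a d : 0 <= q < 1 ->
  0 <= qpoch q (a + d) / qpoch q a <= 1
  /\ 1 - qpoch q (a + d) / qpoch q a <= (q ^ S a - q ^ S (a + d)) / (1 - q).
Proof.
  intros Hq; pose proof (qpoch_pos q a Hq) as Ha; induction d as [|d IH].
  - rewrite Nat.add_0_r; replace (qpoch q a / qpoch q a) with 1 by (field; lra).
    replace ((q ^ S a - q ^ S a) / (1 - q)) with 0 by (field; lra); lra.
  - replace (a + S d)%nat with (S (a + d)) by lia; rewrite qpoch_S.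
    set (r := qpoch q (a + d) / qpoch q a) in *.
    replace (qpoch q (a + d) * (1 - q ^ S (a + d)) / qpoch q a) with (r * (1 - q ^ S (a + d)))
      by (unfold r; field; lra).
    set (t := q ^ S (a + d)) in *.
    assert (0 <= t < 1) by (split; [apply pow_le; lra | apply pow_S_lt_1; lra]).
    change (q ^ S (S (a + d))) with (q * t).
    replace ((q ^ S a - q * t) / (1 - q)) with ((q ^ S a - t) / (1 - q) + t) by (field; lra).
    destruct IH; nra.
Qed.

Definition jacobi_weight q n i := qpoch q n * qbinom q (n + n) i.

Lemma jacobi_weight_dev q n a : 0 <= q < 1 -> (a <= n)%nat ->
  Rabs (1 - jacobi_weight q n a) <= q ^ S a / (1 - q).
Proof.
  intros Hq Han; unfold jacobi_weight, qbinom.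
  destruct (Nat.leb_spec a (n + n)); [|lia].
  destruct (qpoch_ratio q a (n - a) Hq) as [R1 D1].
  destruct (qpoch_ratio q (n + n - a) a Hq) as [R2 D2].
  replace (a + (n - a))%nat with n in * by lia.
  replace (n + n - a + a)%nat with (n + n)%nat in * by lia.
  pose proof (qpoch_pos q a Hq); pose proof (qpoch_pos q (n + n - a) Hq).
  replace (qpoch q n * (qpoch q (n + n) / (qpoch q a * qpoch q (n + n - a))))
    with ((qpoch q n / qpoch q a) * (qpoch q (n + n) / qpoch q (n + n - a))) by (field; lra).
  set (r1 := qpoch q n / qpoch q a) in *; set (r2 := qpoch q (n + n) / qpoch q (n + n - a)) in *.
  assert (q ^ S (n + n - a) <= q ^ S n)
    by (replace (S (n + n - a)) with (S n + (n - a))%nat by lia; apply pow_add_le; lra).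
  assert (0 <= q ^ S (n + n)) by (apply pow_le; lra).
  assert ((q ^ S a - q ^ S n) / (1 - q) + (q ^ S (n + n - a) - q ^ S (n + n)) / (1 - q)
          <= q ^ S a / (1 - q)).
  { unfold Rdiv; rewrite <- Rmult_plus_distr_r; apply Rmult_le_compat_r.
    - apply Rlt_le, Rinv_0_lt_compat; lra.
    - lra. }
  rewrite Rabs_pos_eq; nra.
Qed.

Lemma jacobi_theta_coef q k j : q <> 0 ->
  q ^ tri (S k) * q ^ tri (S k + j) * ((/ q) ^ k) ^ (S k + j) = qtri q j.
Proof.
  intros Hq; rewrite <- pow_add, qtri_tri.
  replace (tri (S k) + tri (S k + j))%nat with (k * (S k + j) + (tri j + j))%nat
    by (pose proof (tri_double (S k)); pose proof (tri_double (S k + j));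
        pose proof (tri_double j); nia).
  apply pow_cancel_inv, Hq.
Qed.

Lemma jacobi_G_coef q k l : q <> 0 -> (l <= k)%nat ->
  q ^ tri (S k) * q ^ tri (k - l) * ((/ q) ^ k) ^ (k - l) = qtri q l.
Proof.
  intros Hq Hl; rewrite <- pow_add, qtri_tri.
  replace (tri (S k) + tri (k - l))%nat with (k * (k - l) + (tri l + l))%nat
    by (destruct (Nat.le_exists_sub l k Hl) as [d [-> _]];
        replace (d + l - l)%nat with d by lia;
        pose proof (tri_double (S (d + l))); pose proof (tri_double d);
        pose proof (tri_double l); nia).
  apply pow_cancel_inv, Hq.
Qed.

Definition tri_geom q c j := q ^ tri j * c ^ j.

Lemma tri_geom_nonneg q c j : 0 <= q -> 0 <= c -> 0 <= tri_geom q c j.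
Proof. intros; apply Rmult_le_pos; apply pow_le; lra. Qed.

Lemma ex_series_tri_geom q c : 0 < q < 1 -> 0 < c -> ex_series (tri_geom q c).
Proof.
  intros Hq Hc.
  assert (Hpos : forall n, 0 < tri_geom q c n)
    by (intros; apply Rmult_lt_0_compat; apply pow_lt; lra).
  eapply ex_series_ext; [intros n; apply Rabs_pos_eq, Rlt_le, Hpos|].
  apply ex_series_DAlembert with 0; [lra | intros n; apply Rgt_not_eq, Hpos|].
  eapply is_lim_seq_ext.
  { intros n; symmetry.
    replace (tri_geom q c (S n) / tri_geom q c n) with (q ^ n * c).
    - apply Rabs_pos_eq, Rmult_le_pos; [apply pow_le|]; lra.
    - unfold tri_geom; simpl tri; rewrite pow_add; simpl pow.
      assert (0 < q ^ tri n) by (apply pow_lt; lra); assert (0 < c ^ n) by (apply pow_lt; lra).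
      field; lra. }
  replace (Finite 0) with (Rbar_mult 0 c) by (simpl; f_equal; ring).
  apply is_lim_seq_scal_r, is_lim_seq_geom; rewrite Rabs_pos_eq; lra.
Qed.

Lemma rsum_tri_geom_le_Series q c n : 0 < q < 1 -> 0 < c ->
  rsum (tri_geom q c) n <= Series (tri_geom q c).
Proof.
  intros Hq Hc; apply rsum_le_Series; [intros; apply tri_geom_nonneg | apply ex_series_tri_geom];
    lra.
Qed.

(** * The finite Jacobi triple product *)

Open Scope C_scope.

Lemma csum_ext f g n : (forall i, (i < n)%nat -> f i = g i) -> csum f n = csum g n.
Proof. apply big_ext. Qed.

Lemma csum_recl f n : csum f (S n) = f O + csum (fun i => f (S i)) n.
Proof. apply big_recl; intros; ring. Qed.

Lemma csum_split f a b : csum f (a + b) = csum f a + csum (fun i => f (a + i)%nat) b.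
Proof. apply big_split; intros; ring. Qed.

Lemma csum_rev f n : csum f n = csum (fun i => f (n - 1 - i)%nat) n.
Proof. apply big_rev; intros; ring. Qed.

Lemma csum_plus f g n : csum (fun i => f i + g i) n = csum f n + csum g n.
Proof. apply big_op; intros; ring. Qed.

Lemma csum_mult_l c f n : csum (fun i => c * f i) n = c * csum f n.
Proof. induction n as [|n IH]; simpl; [ring | rewrite IH; ring]. Qed.

Lemma cprod_split f a b : cprod f (a + b) = cprod f a * cprod (fun i => f (a + i)%nat) b.
Proof. apply big_split; intros; ring. Qed.

Lemma cprod_rev f n : cprod f n = cprod (fun i => f (n - 1 - i)%nat) n.
Proof. apply big_rev; intros; ring. Qed.

Lemma cprod_mult f g n : cprod (fun i => f i * g i) n = cprod f n * cprod g n.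
Proof. apply big_op; intros; ring. Qed.

Lemma Cpown_Cpow x n : Cpown x n = x ^ n.
Proof. induction n as [|n IH]; [reflexivity | exact (f_equal (Cmult x) IH)]. Qed.

Lemma csum_times_linear (c c' : nat -> C) a z N :
  c' O = c O -> (forall i, c' (S i) = c (S i) + a * c i) -> c (S N) = 0 ->
  csum (fun i => c' i * z ^ i) (S (S N)) = (1 + a * z) * csum (fun i => c i * z ^ i) (S N).
Proof.
  intros H0 HS HN.
  assert (Hc : csum (fun i => c i * z ^ i) (S N)
               = c O + csum (fun i => c (S i) * z ^ S i) (S N)).
  { transitivity (csum (fun i => c i * z ^ i) (S (S N))).
    - change (csum (fun i => c i * z ^ i) (S (S N)))
        with (csum (fun i => c i * z ^ i) (S N) + c (S N) * z ^ S N).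
      rewrite HN; ring.
    - rewrite csum_recl; simpl; ring. }
  rewrite csum_recl.
  rewrite (csum_ext _ (fun i => c (S i) * z ^ S i + a * z * (c i * z ^ i)))
    by (intros; rewrite HS; simpl; ring).
  rewrite csum_plus, csum_mult_l, Hc, H0; simpl; ring.
Qed.

Theorem q_binomial q z N : 0 <= q < 1 ->
  cprod (fun m => 1 + z * RtoC (q ^ m)) N
  = csum (fun i => RtoC (qbinom q N i * q ^ tri i) * z ^ i) (S N).
Proof.
  intros Hq; induction N as [|N IH].
  - cbn [big tri Cpow pow]; rewrite qbinom_0, Rmult_1_r by auto; ring.
  - change (cprod (fun m => 1 + z * RtoC (q ^ m)) (S N))
      with (cprod (fun m => 1 + z * RtoC (q ^ m)) N * (1 + z * RtoC (q ^ N))).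
    rewrite IH, (csum_times_linear (fun i => RtoC (qbinom q N i * q ^ tri i))
                   (fun i => RtoC (qbinom q (S N) i * q ^ tri i)) (RtoC (q ^ N))).
    + ring.
    + now rewrite !qbinom_0.
    + intros i; now rewrite qbinom_tri_rec, RtoC_plus, (RtoC_mult (q ^ N)).
    + now rewrite qbinom_gt, Rmult_0_l by lia.
Qed.

Definition theta_term (q : R) (x : C) j := RtoC (qtri q j) * Cpown x j.

Definition G_term (q : R) (x : C) l := RtoC (qtri q l) * Cpown (/ x) (S l).

Definition jacobi_prod (q : R) (x : C) n :=
  RtoC (qpoch q n) * cprod (fun m => (1 + x * RtoC (q ^ S m)) * (1 + RtoC (q ^ m) * / x)) n.

Lemma cprod_reflect (q : R) (x : C) n : (0 < q)%R -> x <> 0 ->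
  cprod (fun m => 1 + RtoC (q ^ m) * / x) n
  = RtoC (q ^ tri n) * (/ x) ^ n * cprod (fun m => 1 + x * RtoC ((/ q) ^ m)) n.
Proof.
  intros Hq Hx; induction n as [|n IH]; [simpl; ring|].
  change (cprod (fun m => 1 + RtoC (q ^ m) * / x) (S n))
    with (cprod (fun m => 1 + RtoC (q ^ m) * / x) n * (1 + RtoC (q ^ n) * / x)).
  change (cprod (fun m => 1 + x * RtoC ((/ q) ^ m)) (S n))
    with (cprod (fun m => 1 + x * RtoC ((/ q) ^ m)) n * (1 + x * RtoC ((/ q) ^ n))).
  rewrite IH; simpl tri; rewrite pow_add, Cpow_S, !RtoC_mult.
  assert (Hinv : RtoC (q ^ n) * RtoC ((/ q) ^ n) = 1)
    by (rewrite <- RtoC_mult, pow_mul_inv_pow by lra; reflexivity).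
  replace (1 + RtoC (q ^ n) * / x)
    with (RtoC (q ^ n) * / x * (1 + x * RtoC ((/ q) ^ n))); [ring|].
  transitivity (RtoC (q ^ n) * / x + (x * / x) * (RtoC (q ^ n) * RtoC ((/ q) ^ n))); [ring|].
  rewrite Hinv, Cinv_r by auto; ring.
Qed.

Lemma cprod_shift_center (q : R) (x : C) k : (0 < q)%R ->
  cprod (fun m => 1 + x * RtoC ((/ q) ^ k) * RtoC (q ^ m)) (S k + S k)
  = cprod (fun m => 1 + x * RtoC ((/ q) ^ m)) (S k) * cprod (fun m => 1 + x * RtoC (q ^ S m)) (S k).
Proof.
  intros Hq; rewrite cprod_split; f_equal.
  - rewrite cprod_rev; apply big_ext; intros m Hm.
    replace (S k - 1 - m)%nat with (k - m)%nat by lia.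
    assert (E : ((/ q) ^ k * q ^ (k - m))%R = ((/ q) ^ m)%R).
    { replace k with (m + (k - m))%nat at 1 by lia.
      rewrite pow_add, Rmult_assoc, (Rmult_comm ((/ q) ^ (k - m))), pow_mul_inv_pow by lra.
      ring. }
    rewrite <- E, RtoC_mult; ring.
  - apply big_ext; intros m Hm.
    assert (E : ((/ q) ^ k * q ^ (S k + m))%R = (q ^ S m)%R).
    { replace (S k + m)%nat with (k + S m)%nat by lia.
      rewrite pow_add, <- Rmult_assoc, (Rmult_comm ((/ q) ^ k)), pow_mul_inv_pow by lra.
      ring. }
    rewrite <- E, RtoC_mult; ring.
Qed.

Lemma jacobi_prod_binomial (q : R) (x : C) k : (0 < q < 1)%R -> x <> 0 ->
  jacobi_prod q x (S k)
  = RtoC (qpoch q (S k) * q ^ tri (S k)) * (/ x) ^ S k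
    * csum (fun i => RtoC (qbinom q (S k + S k) i * q ^ tri i) * (x * RtoC ((/ q) ^ k)) ^ i)
        (S (S k + S k)).
Proof.
  intros Hq Hx; unfold jacobi_prod.
  rewrite cprod_mult, cprod_reflect, <- q_binomial, cprod_shift_center, RtoC_mult
    by (auto || lra).
  ring.
Qed.

Theorem jacobi_prod_expand (q : R) (x : C) k : (0 < q < 1)%R -> x <> 0 ->
  jacobi_prod q x (S k)
  = csum (fun j => RtoC (jacobi_weight q (S k) (S k + j)) * theta_term q x j) (S (S k))
    + csum (fun l => RtoC (jacobi_weight q (S k) (k - l)) * G_term q x l) (S k).
Proof.
  intros Hq Hx; rewrite jacobi_prod_binomial by auto.
  replace (S (S k + S k)) with (S k + S (S k))%nat by lia.
  rewrite csum_split, Cmult_plus_distr_l, <- !csum_mult_l, Cplus_comm; f_equal.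
  - apply csum_ext; intros j _; unfold theta_term, jacobi_weight.
    rewrite (Cpown_Cpow x j), Cpow_mult_l, <- RtoC_pow, <- (jacobi_theta_coef q k j) by lra.
    rewrite Cpow_add_r, Cpow_inv, !RtoC_mult by exact Hx.
    field; apply Cpow_nz, Hx.
  - rewrite csum_rev; apply csum_ext; intros l Hl; unfold G_term, jacobi_weight.
    replace (S k - 1 - l)%nat with (k - l)%nat by lia.
    rewrite (Cpown_Cpow (/ x) (S l)), Cpow_mult_l, <- RtoC_pow, <- (jacobi_G_coef q k l)
      by (lra || lia).
    replace ((/ x) ^ S k) with ((/ x) ^ (k - l) * (/ x) ^ S l)
      by (rewrite <- Cpow_add_r; f_equal; lia).
    rewrite !Cpow_inv, !RtoC_mult by exact Hx.
    field; split; apply Cpow_nz, Hx.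
Qed.

Close Scope C_scope.

(** * Convergence to the theta function *)

Lemma Cmod_csum_le f n : Cmod (csum f n) <= rsum (fun i => Cmod (f i)) n.
Proof.
  induction n as [|n IH]; simpl.
  - rewrite Cmod_0; lra.
  - eapply Rle_trans; [apply Cmod_triangle | lra].
Qed.

Lemma Im_le_Cmod z : Rabs (Im z) <= Cmod z.
Proof.
  pose proof (Rmax_Cmod z); pose proof (Rmax_r (Rabs (fst z)) (Rabs (snd z))).
  unfold Im; lra.
Qed.

Lemma Cmod_le_Re_Im z : Cmod z <= Rabs (Re z) + Rabs (Im z).
Proof.
  pose proof (Cmod2_alt z); pose proof (Cmod_ge_0 z).
  rewrite <- (pow2_abs (Re z)), <- (pow2_abs (Im z)) in H.
  pose proof (Rabs_pos (Re z)); pose proof (Rabs_pos (Im z)); nra.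
Qed.

Lemma Re_csum a N : Re (csum a N) = rsum (fun i => Re (a i)) N.
Proof. induction N as [|N IH]; simpl; [reflexivity | now rewrite <- IH]. Qed.

Lemma Im_csum a N : Im (csum a N) = rsum (fun i => Im (a i)) N.
Proof. induction N as [|N IH]; simpl; [reflexivity | now rewrite <- IH]. Qed.

Lemma Cmod_le_of_approx z P :
  (forall eps, 0 < eps -> exists w, Cmod (z - w)%C < eps /\ Cmod w <= P) -> Cmod z <= P.
Proof.
  intros Happrox; apply Rnot_lt_le; intros Hlt.
  destruct (Happrox (Cmod z - P)) as [w [Hzw Hw]]; [lra|].
  pose proof (Cmod_triangle (z - w) w) as Htri.
  replace (z - w + w)%C with z in Htri by ring; lra.
Qed.

Definition ex_CSeries (a : nat -> C) :=
  ex_series (fun i => Re (a i)) /\ ex_series (fun i => Im (a i)).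

Lemma ex_CSeries_le a b : (forall i, Cmod (a i) <= b i) -> ex_series b -> ex_CSeries a.
Proof.
  intros Hab Hb; split; apply (@ex_series_le R_AbsRing R_CompleteNormedModule _ b); auto;
    intros i; eapply Rle_trans; try apply Hab; [apply re_le_Cmod | apply Im_le_Cmod].
Qed.

Lemma CSeries_partial_cv a : ex_CSeries a -> forall eps, 0 < eps ->
  exists N0, forall N, (N0 <= N)%nat -> Cmod (CSeries a - csum a N)%C < eps.
Proof.
  intros [HRe HIm] eps Heps.
  destruct (Series_partial_cv _ HRe (eps / 2)) as [N1 HN1]; [lra|].
  destruct (Series_partial_cv _ HIm (eps / 2)) as [N2 HN2]; [lra|].
  exists (N1 + N2)%nat; intros N HN.
  eapply Rle_lt_trans; [apply Cmod_le_Re_Im|].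
  change (Re (CSeries a - csum a N)%C) with (Series (fun i => Re (a i)) - Re (csum a N)).
  change (Im (CSeries a - csum a N)%C) with (Series (fun i => Im (a i)) - Im (csum a N)).
  rewrite Re_csum, Im_csum.
  specialize (HN1 N ltac:(lia)); specialize (HN2 N ltac:(lia)); lra.
Qed.

Lemma CSeries_Cmod_le a b :
  (forall i, Cmod (a i) <= b i) -> ex_series b -> Cmod (CSeries a) <= Series b.
Proof.
  intros Hab Hb; apply Cmod_le_of_approx; intros eps Heps.
  destruct (CSeries_partial_cv a (ex_CSeries_le a b Hab Hb) eps Heps) as [N0 HN0].
  exists (csum a N0); split; [apply HN0; lia|].
  eapply Rle_trans; [apply Cmod_csum_le|].
  eapply Rle_trans; [apply rsum_le; intros i _; apply Hab|].
  apply rsum_le_Series; auto.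
  intros i; eapply Rle_trans; [apply Cmod_ge_0 | apply Hab].
Qed.

Lemma CSeries_recl a : ex_CSeries a -> CSeries a = (a O + CSeries (fun k => a (S k)))%C.
Proof.
  intros [HRe HIm]; unfold CSeries.
  rewrite (Series_incr_1 _ HRe), (Series_incr_1 _ HIm); reflexivity.
Qed.

Lemma Cmod_theta_term q x j : 0 <= q -> Cmod (theta_term q x j) = q ^ (tri j + j) * Cmod x ^ j.
Proof.
  intros Hq; unfold theta_term; rewrite (Cpown_Cpow x j), Cmod_mult, Cmod_R, Cmod_pow, qtri_tri.
  rewrite Rabs_pos_eq; [reflexivity | apply pow_le, Hq].
Qed.

Lemma Cmod_G_term q x l : 0 <= q -> x <> RtoC 0 ->
  Cmod (G_term q x l) = q ^ (tri l + l) * (/ Cmod x) ^ S l.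
Proof.
  intros Hq Hx; unfold G_term.
  rewrite (Cpown_Cpow (/ x) (S l)), Cmod_mult, Cmod_R, Cmod_pow, Cmod_inv, qtri_tri by exact Hx.
  rewrite Rabs_pos_eq; [reflexivity | apply pow_le, Hq].
Qed.

Lemma Cmod_csum_weighted_diff (c : nat -> R) (f : nat -> C) (b : nat -> R) n :
  (forall i, (i < n)%nat -> Rabs (1 - c i) * Cmod (f i) <= b i) ->
  Cmod (csum (fun i => (RtoC (c i) * f i)%C) n - csum f n)%C <= rsum b n.
Proof.
  induction n as [|n IH]; intros Hb; simpl.
  - replace (RtoC 0 - RtoC 0)%C with (RtoC 0) by ring; rewrite Cmod_0; lra.
  - replace (csum (fun i => (RtoC (c i) * f i)%C) n + RtoC (c n) * f n - (csum f n + f n))%C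
      with ((csum (fun i => (RtoC (c i) * f i)%C) n - csum f n) + RtoC (c n - 1) * f n)%C
      by (rewrite RtoC_minus; ring).
    eapply Rle_trans; [apply Cmod_triangle|].
    rewrite Cmod_mult, Cmod_R, Rabs_minus_sym.
    assert (Rabs (1 - c n) * Cmod (f n) <= b n) by (apply Hb; lia).
    enough (Cmod (csum (fun i => (RtoC (c i) * f i)%C) n - csum f n)%C <= rsum b n) by lra.
    apply IH; intros; apply Hb; lia.
Qed.

Lemma jacobi_theta_part_error q x n : 0 < q < 1 ->
  Cmod (csum (fun j => (RtoC (jacobi_weight q n (n + j)) * theta_term q x j)%C) (S n)
        - csum (theta_term q x) (S n))%C
  <= q ^ n / (1 - q) * rsum (tri_geom q (Cmod x)) (S n).
Proof.
  intros Hq; rewrite <- rsum_mult_l; apply Cmod_csum_weighted_diff; intros j Hj.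
  replace (jacobi_weight q n (n + j)) with (jacobi_weight q n (n - j))
    by (unfold jacobi_weight; rewrite <- qbinom_sym by lia; do 2 f_equal; lia).
  pose proof (jacobi_weight_dev q n (n - j) ltac:(lra) ltac:(lia)) as Hw.
  rewrite Cmod_theta_term by lra.
  assert (Hexp : q ^ S (n - j) * q ^ (tri j + j) = q * (q ^ n * q ^ tri j))
    by (rewrite <- !pow_add; change (q * q ^ (n + tri j)) with (q ^ S (n + tri j)); f_equal; lia).
  assert (0 <= q ^ n * q ^ tri j * Cmod x ^ j / (1 - q)).
  { apply Rmult_le_pos; [repeat apply Rmult_le_pos; apply pow_le|]; try apply Cmod_ge_0; try lra.
    apply Rlt_le, Rinv_0_lt_compat; lra. }
  apply Rle_trans with (q ^ S (n - j) / (1 - q) * (q ^ (tri j + j) * Cmod x ^ j)).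
  - apply Rmult_le_compat_r; [apply Rmult_le_pos; apply pow_le|]; auto using Cmod_ge_0; lra.
  - unfold tri_geom, Rdiv.
    replace (q ^ S (n - j) * / (1 - q) * (q ^ (tri j + j) * Cmod x ^ j))
      with ((q ^ S (n - j) * q ^ (tri j + j)) * Cmod x ^ j * / (1 - q)) by ring.
    rewrite Hexp; unfold Rdiv in *; nra.
Qed.

Lemma jacobi_G_part_error q x k : 0 < q < 1 -> x <> RtoC 0 ->
  Cmod (csum (fun l => (RtoC (jacobi_weight q (S k) (k - l)) * G_term q x l)%C) (S k)
        - csum (G_term q x) (S k))%C
  <= q ^ S k / (1 - q) * (/ Cmod x * rsum (tri_geom q (/ Cmod x)) (S k)).
Proof.
  intros Hq Hx; rewrite <- !rsum_mult_l; apply Cmod_csum_weighted_diff; intros l Hl.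
  pose proof (jacobi_weight_dev q (S k) (k - l) ltac:(lra) ltac:(lia)) as Hw.
  rewrite Cmod_G_term by (auto || lra).
  assert (Hexp : q ^ S (k - l) * q ^ (tri l + l) = q ^ S k * q ^ tri l)
    by (rewrite <- !pow_add; f_equal; lia).
  apply Rle_trans with (q ^ S (k - l) / (1 - q) * (q ^ (tri l + l) * (/ Cmod x) ^ S l)).
  - apply Rmult_le_compat_r; [apply Rmult_le_pos; apply pow_le|]; auto.
    + lra.
    + apply Rlt_le, Rinv_0_lt_compat, Cmod_gt_0, Hx.
  - right; unfold tri_geom, Rdiv; simpl (_ ^ S l).
    replace (q ^ S (k - l) * / (1 - q) * (q ^ (tri l + l) * (/ Cmod x * (/ Cmod x) ^ l)))
      with ((q ^ S (k - l) * q ^ (tri l + l)) * / (1 - q) * (/ Cmod x * (/ Cmod x) ^ l)) by ring.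
    rewrite Hexp; ring.
Qed.

Lemma jacobi_prod_error q x k : 0 < q < 1 -> x <> RtoC 0 ->
  Cmod (jacobi_prod q x (S k) - (csum (theta_term q x) (S (S k)) + csum (G_term q x) (S k)))%C
  <= q ^ S k / (1 - q)
     * (rsum (tri_geom q (Cmod x)) (S (S k)) + / Cmod x * rsum (tri_geom q (/ Cmod x)) (S k)).
Proof.
  intros Hq Hx; rewrite jacobi_prod_expand by auto.
  match goal with |- Cmod (?A + ?B - (?A0 + ?B0))%C <= _ =>
    replace (A + B - (A0 + B0))%C with ((A - A0) + (B - B0))%C by ring end.
  eapply Rle_trans; [apply Cmod_triangle|].
  pose proof (jacobi_theta_part_error q x (S k) Hq); pose proof (jacobi_G_part_error q x k Hq Hx).
  lra.
Qed.

Lemma ex_CSeries_theta q x : 0 < q < 1 -> x <> RtoC 0 -> ex_CSeries (theta_term q x).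
Proof.
  intros Hq Hx; apply ex_CSeries_le with (tri_geom q (q * Cmod x)).
  - intros j; rewrite Cmod_theta_term by lra; unfold tri_geom.
    rewrite pow_add, Rpow_mult_distr; right; ring.
  - apply ex_series_tri_geom; [lra | apply Rmult_lt_0_compat; [lra | apply Cmod_gt_0, Hx]].
Qed.

Lemma ex_CSeries_G q x : 0 < q < 1 -> x <> RtoC 0 -> ex_CSeries (G_term q x).
Proof.
  intros Hq Hx; pose proof (proj1 (Cmod_gt_0 x) Hx).
  apply ex_CSeries_le with (fun l => / Cmod x * tri_geom q (q / Cmod x) l).
  - intros l; rewrite Cmod_G_term by (auto || lra); unfold tri_geom, Rdiv.
    rewrite pow_add, Rpow_mult_distr; right; simpl; ring.
  - apply (@ex_series_scal_l R_AbsRing R_NormedModule), ex_series_tri_geom; [lra|].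
    apply Rdiv_lt_0_compat; lra.
Qed.

Lemma jacobi_prod_error_geometric q x : 0 < q < 1 -> x <> RtoC 0 ->
  exists M, 0 <= M /\ forall k,
    Cmod (jacobi_prod q x (S k) - (csum (theta_term q x) (S (S k)) + csum (G_term q x) (S k)))%C
    <= q ^ S k * M.
Proof.
  intros Hq Hx; pose proof (proj1 (Cmod_gt_0 x) Hx).
  assert (Hq1 : 0 < / (1 - q)) by (apply Rinv_0_lt_compat; lra).
  assert (Hx1 : 0 < / Cmod x) by (apply Rinv_0_lt_compat; lra).
  set (Sa := Series (tri_geom q (Cmod x))); set (Sg := Series (tri_geom q (/ Cmod x))).
  assert (Hsa : forall n, rsum (tri_geom q (Cmod x)) n <= Sa)
    by (intros; apply rsum_tri_geom_le_Series; lra).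
  assert (Hsg : forall n, rsum (tri_geom q (/ Cmod x)) n <= Sg)
    by (intros; apply rsum_tri_geom_le_Series; lra).
  pose proof (Hsa O) as Hsa0; pose proof (Hsg O) as Hsg0; simpl in Hsa0, Hsg0.
  exists ((Sa + / Cmod x * Sg) / (1 - q)); split.
  - apply Rmult_le_pos; [pose proof (Rmult_le_pos (/ Cmod x) Sg) |]; lra.
  - intros k; eapply Rle_trans; [apply jacobi_prod_error; auto|].
    specialize (Hsa (S (S k))); specialize (Hsg (S k)).
    pose proof (Rmult_le_compat_l (/ Cmod x) _ _ (Rlt_le _ _ Hx1) Hsg).
    assert (0 <= q ^ S k / (1 - q)) by (apply Rmult_le_pos; [apply pow_le|]; lra).
    replace (q ^ S k * ((Sa + / Cmod x * Sg) / (1 - q)))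
      with (q ^ S k / (1 - q) * (Sa + / Cmod x * Sg)) by (unfold Rdiv; ring).
    apply Rmult_le_compat_l; lra.
Qed.

Theorem jacobi_triple_product q x : 0 < q < 1 -> x <> RtoC 0 ->
  forall eps, 0 < eps -> exists K, forall k, (K <= k)%nat ->
    Cmod (ThetaStar q x - jacobi_prod q x (S k))%C < eps.
Proof.
  intros Hq Hx eps Heps.
  destruct (CSeries_partial_cv _ (ex_CSeries_theta q x Hq Hx) (eps / 3)) as [Na HNa]; [lra|].
  destruct (CSeries_partial_cv _ (ex_CSeries_G q x Hq Hx) (eps / 3)) as [Ng HNg]; [lra|].
  destruct (jacobi_prod_error_geometric q x Hq Hx) as [M [HM0 HM]].
  destruct (pow_lt_1_zero q ltac:(rewrite Rabs_pos_eq; lra) (eps / 3 / (M + 1))) as [Nq HNq];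
    [apply Rdiv_lt_0_compat; lra|].
  exists (Na + Ng + Nq)%nat; intros k Hk.
  specialize (HNa (S (S k)) ltac:(lia)); specialize (HNg (S k) ltac:(lia)); specialize (HM k).
  specialize (HNq (S k) ltac:(lia)); rewrite Rabs_pos_eq in HNq by (apply pow_le; lra).
  assert (q ^ S k * M < eps / 3).
  { apply Rle_lt_trans with (q ^ S k * (M + 1)); [apply Rmult_le_compat_l; [apply pow_le|]; lra|].
    apply Rmult_lt_reg_r with (/ (M + 1)); [apply Rinv_0_lt_compat; lra|].
    rewrite Rmult_assoc, Rinv_r, Rmult_1_r by lra; exact HNq. }
  unfold ThetaStar; change (theta q x) with (CSeries (theta_term q x));
    change (Gfun q x) with (CSeries (G_term q x)).
  match goal with |- Cmod (?A + ?B - ?T)%C < _ =>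
    replace (A + B - T)%C with ((A - csum (theta_term q x) (S (S k)))
      + (B - csum (G_term q x) (S k))
      - (T - (csum (theta_term q x) (S (S k)) + csum (G_term q x) (S k))))%C by ring end.
  eapply Rle_lt_trans; [apply Cmod_triangle|]; rewrite Cmod_opp.
  pose proof (Cmod_triangle (CSeries (theta_term q x) - csum (theta_term q x) (S (S k)))
                            (CSeries (G_term q x) - csum (G_term q x) (S k))).
  lra.
Qed.

(** * Size of the factors on the arc *)

Definition jacobi_factor (q : R) (x : C) m :=
  (1 - q ^ S m) * Cmod (1 + x * RtoC (q ^ S m))%C * Cmod (1 + RtoC (q ^ m) * / x)%C.

Lemma Cmod_jacobi_prod q x n :
  0 <= q < 1 -> Cmod (jacobi_prod q x n) = rprod (jacobi_factor q x) n.
Proof.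
  intros Hq; induction n as [|n IH].
  - unfold jacobi_prod; change (qpoch q 0) with 1; cbn [big].
    rewrite Cmult_1_l, Cmod_1; reflexivity.
  - assert (E : jacobi_prod q x (S n) = (jacobi_prod q x n * (RtoC (1 - q ^ S n)
                  * (1 + x * RtoC (q ^ S n)) * (1 + RtoC (q ^ n) * / x)))%C)
      by (unfold jacobi_prod; rewrite qpoch_S, RtoC_mult; cbn [big]; ring).
    rewrite E, !Cmod_mult, IH, Cmod_R, Rabs_pos_eq by (pose proof (pow_S_lt_1 q n Hq); lra).
    cbn [big]; unfold jacobi_factor; ring.
Qed.

Lemma jacobi_factor_nonneg q x m : 0 <= q < 1 -> 0 <= jacobi_factor q x m.
Proof.
  intros Hq; pose proof (pow_S_lt_1 q m Hq); unfold jacobi_factor.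
  apply Rmult_le_pos; [apply Rmult_le_pos|]; try apply Cmod_ge_0; lra.
Qed.

Definition below_first (v : R) (Is : list (R * R)) : Prop :=
  match Is with [] => True | (lo, _) :: _ => v < lo end.

Section IntervalHits.
Variables (t f : nat -> R) (bound : R * R -> R).
Hypothesis t_antitone : forall m m', (m <= m')%nat -> t m' <= t m.
Hypothesis f_01 : forall m, 0 <= f m <= 1.
Hypothesis f_bound : forall m lo hi, lo <= t m <= hi -> f m <= bound (lo, hi).

(* As [t] is antitone, the indices hitting successive intervals decrease, so distinct
   factors are selected. *)
Fixpoint chain_hit (Is : list (R * R)) : Prop :=
  match Is with
  | [] => True
  | (lo, hi) :: Is' => (exists m, lo <= t m <= hi) /\ below_first hi Is' /\ chain_hit Is'
  end.

Lemma rprod_le_of_chain_hit Is : chain_hit Is ->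
  exists N, rprod f N <= fold_right Rmult 1 (map bound Is)
            /\ forall m, below_first (t m) Is -> (N <= m)%nat.
Proof.
  induction Is as [|[lo hi] Is IH]; simpl.
  - intros _; exists O; split; [simpl; lra | intros; lia].
  - intros [[m Hm] [Hbelow Hchain]]; destruct (IH Hchain) as [N [HN Hmin]].
    assert (HNm : (N <= m)%nat).
    { apply Hmin; destruct Is as [|[lo1 hi1] Is]; simpl in *; [auto | lra]. }
    exists (S m); split.
    + assert (rprod f m <= rprod f N)
        by (replace m with (N + (m - N))%nat by lia; apply rprod_antitone, f_01).
      pose proof (rprod_nonneg_le_1 f m f_01); pose proof (f_bound _ _ _ Hm); pose proof (f_01 m).
      simpl; rewrite Rmult_comm; apply Rmult_le_compat; lra.
    + intros m' Hm'; destruct (Nat.le_gt_cases m' m) as [Hle|]; [|lia].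
      pose proof (t_antitone _ _ Hle); lra.
Qed.

End IntervalHits.

Lemma Cmod_sq_1_plus_mul (z : C) t :
  Cmod (1 + z * RtoC t)%C ^ 2 = 1 + 2 * t * Re z + t ^ 2 * Cmod z ^ 2.
Proof. rewrite !Cmod2_alt; destruct z as [a b]; simpl; ring. Qed.

Lemma Re_Cinv (z : C) : z <> RtoC 0 -> Re (/ z)%C = Re z / Cmod z ^ 2.
Proof.
  intros Hz; rewrite Cmod2_alt; destruct z as [a b]; reflexivity.
Qed.

(* On the arc, |1 + x t|^2 = 1 + 2 t Re x + 9 t^2 <= arc_quad t for t >= 0, as Re x <= -2.1. *)
Definition arc_quad t := 1 - 42/10 * t + 9 * t ^ 2.

Lemma arc_quad_pos t : 0 < arc_quad t.
Proof. unfold arc_quad; nra. Qed.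

Lemma arc_quad_le_max lo t hi : lo <= t <= hi -> arc_quad t <= Rmax (arc_quad lo) (arc_quad hi).
Proof.
  intros Ht; pose proof (Rmax_l (arc_quad lo) (arc_quad hi));
    pose proof (Rmax_r (arc_quad lo) (arc_quad hi)).
  destruct (Req_dec lo hi) as [<-|Hne]; [replace t with lo by lra; lra|].
  assert (Hconv : arc_quad lo * (hi - t) + arc_quad hi * (t - lo) - arc_quad t * (hi - lo)
                  = 9 * (hi - lo) * (t - lo) * (hi - t)) by (unfold arc_quad; ring).
  apply Rmult_le_reg_r with (hi - lo); [lra|].
  assert (0 <= 9 * (hi - lo) * (t - lo) * (hi - t))
    by (repeat apply Rmult_le_pos; lra).
  nra.
Qed.

Lemma arc_quad_damped_le_1 t : 0 <= t <= 1 -> (1 - t) ^ 2 * arc_quad t <= 1.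
Proof.
  intros Ht; pose proof (arc_quad_pos t); unfold arc_quad in *.
  destruct (Rle_or_lt t (7/15)) as [H1|H1]; [|destruct (Rle_or_lt t (3/5)) as [H2|H2]].
  - assert (1 - 42/10 * t + 9 * t ^ 2 <= 1) by nra; assert ((1 - t) ^ 2 <= 1) by nra; nra.
  - assert (1 - 42/10 * t + 9 * t ^ 2 <= 172/100) by nra.
    assert ((1 - t) ^ 2 <= 64/225) by nra; nra.
  - assert (1 - 42/10 * t + 9 * t ^ 2 <= 58/10) by nra; assert ((1 - t) ^ 2 <= 4/25) by nra; nra.
Qed.

Definition interval_bound (I : R * R) :=
  (1 - fst I) ^ 2 * Rmax (arc_quad (fst I)) (arc_quad (snd I)).

Lemma pow_hits_interval q lo hi : 0 < q < 1 -> 0 < lo -> lo <= q * hi -> hi <= 1 ->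
  exists m, lo <= q ^ S m <= hi.
Proof.
  intros Hq Hlo Hlohi Hhi.
  destruct (pow_lt_1_zero q ltac:(rewrite Rabs_pos_eq; lra) lo Hlo) as [N HN].
  specialize (HN (S N) ltac:(lia)); rewrite Rabs_pos_eq in HN by (apply pow_le; lra).
  induction N as [|N IH]; [simpl in HN; nra|].
  destruct (Rle_or_lt lo (q ^ S N)) as [Hge|Hlt]; [|apply IH, Hlt].
  exists N; split; [exact Hge|].
  apply Rnot_lt_le; intros Hgt; change (q ^ S (S N)) with (q * q ^ S N) in HN; nra.
Qed.

Section ArcFactors.
Variable x : C.
Hypothesis x_mod : Cmod x = 3.
Hypothesis x_re : Re x <= -21/10.

Lemma jacobi_factor_sq_le q m : 0 <= q < 1 ->
  jacobi_factor q x m ^ 2 <= (1 - q ^ S m) ^ 2 * arc_quad (q ^ S m).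
Proof.
  intros Hq; set (t := q ^ S m); set (s := q ^ m).
  assert (0 <= t < 1) by (split; [apply pow_le; lra | apply pow_S_lt_1; lra]).
  assert (0 <= s <= 1)
    by (split; [apply pow_le; lra | rewrite <- (pow1 m); apply pow_incr; lra]).
  assert (Hx0 : x <> RtoC 0) by (intros ->; rewrite Cmod_0 in x_mod; lra).
  assert (Hout : Cmod (1 + x * RtoC t)%C ^ 2 <= arc_quad t).
  { rewrite Cmod_sq_1_plus_mul, x_mod; unfold arc_quad; nra. }
  assert (Hin : Cmod (1 + RtoC s * / x)%C ^ 2 <= 1).
  { rewrite Cmult_comm, Cmod_sq_1_plus_mul, Re_Cinv, Cmod_inv, x_mod by exact Hx0.
    unfold Rdiv; nra. }
  unfold jacobi_factor; fold t s.
  replace (((1 - t) * Cmod (1 + x * RtoC t)%C * Cmod (1 + RtoC s * / x)%C) ^ 2)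
    with ((1 - t) ^ 2 * Cmod (1 + x * RtoC t)%C ^ 2 * Cmod (1 + RtoC s * / x)%C ^ 2) by ring.
  assert (0 <= (1 - t) ^ 2) by nra.
  pose proof (pow2_ge_0 (Cmod (1 + x * RtoC t)%C));
    pose proof (pow2_ge_0 (Cmod (1 + RtoC s * / x)%C)).
  apply Rle_trans with ((1 - t) ^ 2 * Cmod (1 + x * RtoC t)%C ^ 2 * 1);
    [apply Rmult_le_compat_l; nra | rewrite Rmult_1_r; apply Rmult_le_compat_l; lra].
Qed.

Lemma jacobi_factor_sq_01 q m : 0 <= q < 1 -> 0 <= jacobi_factor q x m ^ 2 <= 1.
Proof.
  intros Hq; split; [apply pow2_ge_0|].
  eapply Rle_trans; [apply jacobi_factor_sq_le, Hq|].
  apply arc_quad_damped_le_1; split; [apply pow_le | apply Rlt_le, pow_S_lt_1]; lra.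
Qed.

Lemma jacobi_factor_sq_le_interval q m lo hi : 0 <= q < 1 -> lo <= q ^ S m <= hi ->
  jacobi_factor q x m ^ 2 <= interval_bound (lo, hi).
Proof.
  intros Hq Ht; eapply Rle_trans; [apply jacobi_factor_sq_le, Hq|].
  unfold interval_bound; cbn [fst snd].
  pose proof (pow_S_lt_1 q m Hq); pose proof (arc_quad_pos (q ^ S m)).
  apply Rmult_le_compat; [nra | lra | nra | apply arc_quad_le_max; lra].
Qed.

Lemma jacobi_factors_sq_le_band a b q N : 0 <= a <= q -> q <= b -> q < 1 ->
  rprod (fun m => jacobi_factor q x m ^ 2) N
  <= rprod (fun m => interval_bound (a ^ S m, b ^ S m)) N.
Proof.
  intros Ha Hb Hq1; apply rprod_le; intros m; split; [apply pow2_ge_0|].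
  apply jacobi_factor_sq_le_interval; [lra|].
  split; apply pow_incr; lra.
Qed.

Lemma jacobi_factor_01 q m : 0 <= q < 1 -> 0 <= jacobi_factor q x m <= 1.
Proof.
  intros Hq; pose proof (jacobi_factor_nonneg q x m Hq); pose proof (jacobi_factor_sq_01 q m Hq).
  nra.
Qed.

Ltac interval_bounds_lt :=
  unfold interval_bound; cbn [fst snd big map fold_right];
  repeat match goal with |- context [Rmax ?a ?b] =>
    first [ rewrite (Rmax_left a b) by (unfold arc_quad; lra)
          | rewrite (Rmax_right a b) by (unfold arc_quad; lra) ] end;
  unfold arc_quad; lra.

Lemma jacobi_factors_small_low q : 1/2 <= q <= 13/20 ->
  exists N, rprod (fun m => jacobi_factor q x m ^ 2) N < 1/36.
Proof.
  intros Hq; destruct (Rle_or_lt q (11/20)); [|destruct (Rle_or_lt q (3/5))].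
  - exists 7%nat; eapply Rle_lt_trans;
      [apply (jacobi_factors_sq_le_band (1/2) (11/20)); lra | interval_bounds_lt].
  - exists 6%nat; eapply Rle_lt_trans;
      [apply (jacobi_factors_sq_le_band (11/20) (3/5)); lra | interval_bounds_lt].
  - exists 5%nat; eapply Rle_lt_trans;
      [apply (jacobi_factors_sq_le_band (3/5) (13/20)); lra | interval_bounds_lt].
Qed.

Lemma jacobi_factors_small_high q : 13/20 <= q < 1 ->
  exists N, rprod (fun m => jacobi_factor q x m ^ 2) N < 1/36.
Proof.
  intros Hq.
  (* Each interval satisfies lo <= 13/20 * hi, so it contains a power of q. *)
  set (Is := [(23/500, 71/1000); (9/125, 111/1000); (14/125, 173/1000); (87/500, 269/1000);
              (27/100, 52/125); (417/1000, 321/500); (643/1000, 99/100)]).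
  destruct (rprod_le_of_chain_hit (fun m => q ^ S m) (fun m => jacobi_factor q x m ^ 2)
              interval_bound) with Is as [N [HN _]].
  - intros m m' Hm; replace (S m') with (S m + (m' - m))%nat by lia.
    apply pow_add_le; lra.
  - intros m; apply jacobi_factor_sq_01; auto; lra.
  - intros m lo hi; apply jacobi_factor_sq_le_interval; auto; lra.
  - unfold Is; simpl; repeat split; try lra; apply pow_hits_interval; lra.
  - exists N; eapply Rle_lt_trans; [exact HN | unfold Is; interval_bounds_lt].
Qed.

Lemma jacobi_factors_small q : 1/2 <= q < 1 -> exists N, rprod (jacobi_factor q x) N < 1/6.
Proof.
  intros Hq.
  assert (HN : exists N, rprod (fun m => jacobi_factor q x m ^ 2) N < 1/36)
    by (destruct (Rle_or_lt q (13/20));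
        [apply jacobi_factors_small_low | apply jacobi_factors_small_high]; lra).
  destruct HN as [N HN]; exists N; rewrite rprod_pow2 in HN.
  pose proof (rprod_nonneg_le_1 _ N (fun m => jacobi_factor_01 q m ltac:(lra))); nra.
Qed.

End ArcFactors.

(** * Bounds for G and Theta* on the arc *)

Lemma Gfun_Cmod_ge q x : 0 <= q <= 1 -> 1 < Cmod x ->
  / Cmod x - / (Cmod x * (Cmod x - 1)) <= Cmod (Gfun q x).
Proof.
  intros Hq Hr; set (r := Cmod x) in *.
  assert (Hx0 : x <> RtoC 0) by (intros ->; unfold r in Hr; rewrite Cmod_0 in Hr; lra).
  assert (Hgeom : Rabs (/ r) < 1).
  { rewrite Rabs_pos_eq; [rewrite <- Rinv_1; apply Rinv_lt_contravar|]; try lra.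
    apply Rlt_le, Rinv_0_lt_compat; lra. }
  assert (HG : forall l, Cmod (G_term q x l) <= / r * (/ r) ^ l).
  { intros l; rewrite Cmod_G_term by (auto || lra); fold r.
    assert (q ^ (tri l + l) <= 1) by (rewrite <- (pow1 (tri l + l)); apply pow_incr; lra).
    assert (0 <= (/ r) ^ S l) by (apply pow_le, Rlt_le, Rinv_0_lt_compat; lra).
    simpl (_ ^ S l) in *; nra. }
  assert (Hex : ex_series (fun l => / r * (/ r) ^ l))
    by (apply (@ex_series_scal_l R_AbsRing R_NormedModule); eexists; apply is_series_geom, Hgeom).
  change (Gfun q x) with (CSeries (G_term q x)).
  rewrite (CSeries_recl _ (ex_CSeries_le _ _ HG Hex)).
  assert (Hhead : Cmod (G_term q x 0) = / r)
    by (rewrite Cmod_G_term by (auto || lra); simpl; fold r; ring).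
  assert (Htail : Cmod (CSeries (fun l => G_term q x (S l))) <= / (r * (r - 1))).
  { eapply Rle_trans; [apply (CSeries_Cmod_le _ (fun l => / r * / r * (/ r) ^ l))|].
    - intros l; eapply Rle_trans; [apply HG | simpl; right; ring].
    - apply (@ex_series_scal_l R_AbsRing R_NormedModule); eexists; apply is_series_geom, Hgeom.
    - rewrite Series_scal_l, Series_geom by exact Hgeom; right; field; lra. }
  pose proof (Cmod_triangle (G_term q x 0 + CSeries (fun l => G_term q x (S l)))
                            (- CSeries (fun l => G_term q x (S l)))) as Htri.
  replace (G_term q x 0 + CSeries (fun l => G_term q x (S l))
           + - CSeries (fun l => G_term q x (S l)))%C with (G_term q x 0) in Htri by ring.
  rewrite Cmod_opp in Htri; lra.
Qed.

Lemma ThetaStar_Cmod_le_prod q x N : 0 < q < 1 -> x <> RtoC 0 ->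
  (forall m, 0 <= jacobi_factor q x m <= 1) -> Cmod (ThetaStar q x) <= rprod (jacobi_factor q x) N.
Proof.
  intros Hq Hx Hf; apply Cmod_le_of_approx; intros eps Heps.
  destruct (jacobi_triple_product q x Hq Hx eps Heps) as [K HK].
  exists (jacobi_prod q x (S (N + K))); split; [apply HK; lia|].
  rewrite Cmod_jacobi_prod by lra; replace (S (N + K)) with (N + S K)%nat by lia.
  apply rprod_antitone, Hf.
Qed.

Lemma ThetaStar_Cmod_lt q x : 1/2 <= q < 1 -> Cmod x = 3 -> Re x <= -21/10 ->
  Cmod (ThetaStar q x) < 1/6.
Proof.
  intros Hq Hx Hre.
  assert (Hx0 : x <> RtoC 0) by (intros ->; rewrite Cmod_0 in Hx; lra).
  destruct (jacobi_factors_small x Hx Hre q Hq) as [N HN].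
  eapply Rle_lt_trans; [|exact HN].
  apply ThetaStar_Cmod_le_prod; auto; [lra|].
  intros m; apply jacobi_factor_01; auto; lra.
Qed.

Lemma cos_le_on_arc phi : 3 * PI / 4 <= phi <= PI -> cos phi <= -7/10.
Proof.
  intros Hphi; pose proof PI_RGT_0.
  assert (Hc : cos phi <= cos (3 * (PI / 4))).
  { destruct (Req_dec phi (3 * (PI / 4))) as [->|Hne]; [lra|].
    left; apply cos_decreasing_1; lra. }
  rewrite cos_3PI4 in Hc.
  assert (Hs : sqrt 2 <= 10/7)
    by (rewrite <- (sqrt_square (10/7)) by lra; apply sqrt_le_1_alt; lra).
  assert (0 < sqrt 2) by (apply sqrt_lt_R0; lra).
  assert (7/10 <= / sqrt 2)
    by (replace (7/10) with (/ (10/7)) by field; apply Rinv_le_contravar; lra).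
  unfold Rdiv in Hc; lra.
Qed.

Lemma Cmod_arc_pt phi : Cmod (arc_pt phi) = 3.
Proof.
  unfold Cmod, arc_pt; cbn [fst snd].
  replace ((3 * cos phi) ^ 2 + (3 * sin phi) ^ 2) with (3 * 3)
    by (pose proof (sin2_cos2 phi); unfold Rsqr in *; nra).
  apply sqrt_square; lra.
Qed.

Theorem lemma5 (q phi : R) :
  1/2 <= q < 1 -> 3 * PI / 4 <= phi <= PI ->
  Cmod (Gfun q (arc_pt phi)) > Cmod (ThetaStar q (arc_pt phi)) /\
  Cmod (theta q (arc_pt phi)) > 0.
Proof.
  intros Hq Hphi; set (x := arc_pt phi).
  assert (Hx : Cmod x = 3) by apply Cmod_arc_pt.
  assert (Hre : Re x <= -21/10)
    by (pose proof (cos_le_on_arc phi Hphi); unfold x, arc_pt, Re; simpl; lra).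
  assert (HG : 1/6 <= Cmod (Gfun q x)).
  { pose proof (Gfun_Cmod_ge q x ltac:(lra) ltac:(lra)) as H; rewrite Hx in H.
    replace (/ 3 - / (3 * (3 - 1))) with (1/6) in H by field; exact H. }
  pose proof (ThetaStar_Cmod_lt q x Hq Hx Hre) as HT.
  split; [lra|].
  pose proof (Cmod_triangle (theta q x) (- ThetaStar q x)) as Htri.
  replace (theta q x + - ThetaStar q x)%C with (- Gfun q x)%C in Htri by (unfold ThetaStar; ring).
  rewrite !Cmod_opp in Htri; lra.
Qed.
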